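(* For $N\ge3$, inside $O_N^+$: $$O_N\cap\bar O_N=H_N,\quad O_N\cap\bar O_N^*=H_N,\quad O_N^*\cap\bar O_N=H_N,\quad O_N^*\cap\bar O_N^*=H_N^*.$$ For $N=2$: $O_2\cap\bar O_2=H_2$, $O_2\cap\bar O_2^*=O_2$, $O_2^*\cap\bar O_2=\bar O_2$, $O_2^*\cap\bar O_2^*=O_2^+$.
   Context: $C(O_N^+)$ is the universal $C^*$-algebra generated by self-adjoint $u_{ij}$ ($1\le i,j\le N$) with $u=(u_{ij})$ orthogonal, a compact quantum group with $\Delta(u_{ij})=\sum_ku_{ik}\otimes u_{kj}$. Closed quantum subgroups are defined by imposing relations on the $u_{ij}$; the intersection of two is obtained by imposing both sets of relations. With $a,b,c$ ranging over the entries $u_{ij}$: $O_N$: all entries commute (orthogonal group); $H_N\subset O_N$: signed permutation matrices; $O_N^*$: $abc=cba$ for all $a,b,c$; $\bar O_N$: $ab=-ba$ if $a\ne b$ are on the same row or same column, $ab=ba$ otherwise; $\bar O_N^*$: $abc=-cba$ if $(r\le2,s=3)$ or $(r=3,s\le2)$, and $abc=cba$ if $(r\le2,s\le2)$ or $r=s=3$, where $r$ and $s$ are the numbers of distinct rows and of distinct columns of $u$ containing $a,b,c$; $H_N^+$: $u_{ij}u_{ik}=0=u_{ji}u_{ki}$ for $j\ne k$; $H_N^*=H_N^+\cap O_N^*$. *)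

From Stdlib Require Import Reals Arith.
Open Scope R_scope.

(** A complex algebra is presented as a real algebra together with a central
    element [ci] with [ci * ci = -1]; the complex scalar a + b i acts on x as
    a x + b (ci x). *)
Record CStarAlgebra := {
  car :> Type;
  c0 : car; c1 : car;
  cadd : car -> car -> car; copp : car -> car; cmul : car -> car -> car;
  rscal : R -> car -> car;
  ci : car;
  cstar : car -> car;
  cnorm : car -> R;
  caddA : forall x y z, cadd x (cadd y z) = cadd (cadd x y) z;
  caddC : forall x y, cadd x y = cadd y x;
  cadd0 : forall x, cadd c0 x = x;
  caddN : forall x, cadd (copp x) x = c0;
  cmulA : forall x y z, cmul x (cmul y z) = cmul (cmul x y) z;
  cmul1l : forall x, cmul c1 x = x;
  cmul1r : forall x, cmul x c1 = x;
  cmulDl : forall x y z, cmul (cadd x y) z = cadd (cmul x z) (cmul y z);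
  cmulDr : forall x y z, cmul x (cadd y z) = cadd (cmul x y) (cmul x z);
  rscalA : forall a b x, rscal a (rscal b x) = rscal (a * b) x;
  rscal1 : forall x, rscal 1 x = x;
  rscalDl : forall a b x, rscal (a + b) x = cadd (rscal a x) (rscal b x);
  rscalDr : forall a x y, rscal a (cadd x y) = cadd (rscal a x) (rscal a y);
  rscal_mull : forall a x y, cmul (rscal a x) y = rscal a (cmul x y);
  rscal_mulr : forall a x y, cmul x (rscal a y) = rscal a (cmul x y);
  ci_sq : cmul ci ci = copp c1;
  ci_central : forall x, cmul ci x = cmul x ci;
  cstarK : forall x, cstar (cstar x) = x;
  cstarD : forall x y, cstar (cadd x y) = cadd (cstar x) (cstar y);
  cstarM : forall x y, cstar (cmul x y) = cmul (cstar y) (cstar x);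
  cstarZ : forall a x, cstar (rscal a x) = rscal a (cstar x);
  cstar_ci : cstar ci = copp ci;
  cnorm_eq0 : forall x, cnorm x = 0 <-> x = c0;
  cnormD : forall x y, cnorm (cadd x y) <= cnorm x + cnorm y;
  cnormZ : forall a b x,
      cnorm (cadd (rscal a x) (rscal b (cmul ci x))) = sqrt (a ^ 2 + b ^ 2) * cnorm x;
  cnormM : forall x y, cnorm (cmul x y) <= cnorm x * cnorm y;
  cnorm_cstar : forall x, cnorm (cmul (cstar x) x) = cnorm x * cnorm x;
  ccomplete : forall s : nat -> car,
      (forall eps, 0 < eps -> exists M, forall m n, (M <= m)%nat -> (M <= n)%nat ->
          cnorm (cadd (s m) (copp (s n))) < eps) ->
      exists l, forall eps, 0 < eps -> exists M, forall n, (M <= n)%nat ->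
          cnorm (cadd (s n) (copp l)) < eps
}.

Arguments c0 {c}. Arguments c1 {c}. Arguments cadd {c}. Arguments copp {c}.
Arguments cmul {c}. Arguments cstar {c}.

Fixpoint csum {A : CStarAlgebra} (n : nat) (f : nat -> A) : A :=
  match n with
  | O => c0
  | S n' => cadd (csum n' f) (f n')
  end.

Definition kron {A : CStarAlgebra} (i j : nat) : A :=
  if Nat.eqb i j then c1 else c0.

(** [u] is an N x N matrix of self-adjoint elements which is orthogonal
    (u u^t = u^t u = 1): these are the defining relations of C(O_N^+). *)
Definition orth_sa (N : nat) {A : CStarAlgebra} (u : nat -> nat -> A) : Prop :=
  (forall i j, (i < N)%nat -> (j < N)%nat -> cstar (u i j) = u i j) /\
  (forall i j, (i < N)%nat -> (j < N)%nat ->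
      csum N (fun k => cmul (u i k) (u j k)) = kron i j) /\
  (forall i j, (i < N)%nat -> (j < N)%nat ->
      csum N (fun k => cmul (u k i) (u k j)) = kron i j).

Definition rel_O (N : nat) {A : CStarAlgebra} (u : nat -> nat -> A) : Prop :=
  forall i j k l, (i < N)%nat -> (j < N)%nat -> (k < N)%nat -> (l < N)%nat ->
    cmul (u i j) (u k l) = cmul (u k l) (u i j).

Definition rel_Ostar (N : nat) {A : CStarAlgebra} (u : nat -> nat -> A) : Prop :=
  forall i1 j1 i2 j2 i3 j3,
    (i1 < N)%nat -> (j1 < N)%nat -> (i2 < N)%nat -> (j2 < N)%nat ->
    (i3 < N)%nat -> (j3 < N)%nat ->
    cmul (cmul (u i1 j1) (u i2 j2)) (u i3 j3) = cmul (cmul (u i3 j3) (u i2 j2)) (u i1 j1).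

Definition rel_Obar (N : nat) {A : CStarAlgebra} (u : nat -> nat -> A) : Prop :=
  forall i j k l, (i < N)%nat -> (j < N)%nat -> (k < N)%nat -> (l < N)%nat ->
    if ((negb (Nat.eqb i k && Nat.eqb j l)) && (Nat.eqb i k || Nat.eqb j l))%bool
    then cmul (u i j) (u k l) = copp (cmul (u k l) (u i j))
    else cmul (u i j) (u k l) = cmul (u k l) (u i j).

Definition ndist3 (x y z : nat) : nat :=
  if Nat.eqb x y then (if Nat.eqb y z then 1 else 2)
  else if (Nat.eqb y z || Nat.eqb x z)%bool then 2 else 3.

Definition rel_Obarstar (N : nat) {A : CStarAlgebra} (u : nat -> nat -> A) : Prop :=
  forall i1 j1 i2 j2 i3 j3,
    (i1 < N)%nat -> (j1 < N)%nat -> (i2 < N)%nat -> (j2 < N)%nat ->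
    (i3 < N)%nat -> (j3 < N)%nat ->
    let r := ndist3 i1 i2 i3 in
    let s := ndist3 j1 j2 j3 in
    let abc := cmul (cmul (u i1 j1) (u i2 j2)) (u i3 j3) in
    let cba := cmul (cmul (u i3 j3) (u i2 j2)) (u i1 j1) in
    (((r <= 2)%nat /\ s = 3%nat) \/ (r = 3%nat /\ (s <= 2)%nat) -> abc = copp cba) /\
    (((r <= 2)%nat /\ (s <= 2)%nat) \/ (r = 3%nat /\ s = 3%nat) -> abc = cba).

Definition rel_Hplus (N : nat) {A : CStarAlgebra} (u : nat -> nat -> A) : Prop :=
  forall i j k, (i < N)%nat -> (j < N)%nat -> (k < N)%nat -> j <> k ->
    cmul (u i j) (u i k) = c0 /\ cmul (u j i) (u k i) = c0.

(** H_N (signed permutation matrices) = O_N \cap H_N^+ ;  H_N^* = O_N^* \cap H_N^+. *)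
Definition rel_H (N : nat) {A : CStarAlgebra} (u : nat -> nat -> A) : Prop :=
  rel_O N u /\ rel_Hplus N u.
Definition rel_Hstar (N : nat) {A : CStarAlgebra} (u : nat -> nat -> A) : Prop :=
  rel_Ostar N u /\ rel_Hplus N u.

(* For N >= 3 the twisted relations destroy the off-diagonal products. If a = u_ij and
   b = u_ik lie on a row and l is a third column, then the relations of \bar O_N (by
   counting signs) and those of \bar O_N^* (directly) both give (ab)u_ml = -(u_ml b)a,
   while half-commutation gives (ab)u_ml = (u_ml b)a. Hence (ab)u_ml = 0 for every m,
   and ab = 0 because sum_m u_ml^2 = 1; columns follow by transposition. In the
   commutative case already ab = ba = -ba. Conversely, inside H_N^+ every product that
   the twisted relations constrain vanishes.
   For N = 2 the number of anticommuting pairs among three entries is always even, so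
   \bar O_2 is half-commutative, and the twisted half-commutation relations are
   vacuous. Finally O_2^* = O_2^+: all squares of entries are central, and orthogonality
   gives ab = -cd, ba = -dc, ac = -bd, ca = -db for u = [[a, b], [c, d]], which settles
   the half-commutation relations with middle entry a; the other middle entries are
   moved to the corner by swapping rows and columns. *)

From Stdlib Require Import Rbase Arith Lia Bool List.
Import ListNotations.
Local Open Scope nat_scope.

Section Ring.
Context {A : CStarAlgebra}.
Implicit Types x y z : A.

Lemma caddr0 x : cadd x c0 = x.
Proof. rewrite caddC; apply cadd0. Qed.

Lemma caddrN x : cadd x (copp x) = c0.
Proof. rewrite caddC; apply caddN. Qed.

Lemma caddIr z x y : cadd x z = cadd y z -> x = y.
Proof.
  intro E. rewrite <- (caddr0 x), <- (caddrN z), caddA, E, <- caddA, caddrN, caddr0.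
  reflexivity.
Qed.

Lemma caddr_eq0 x y : cadd x y = c0 -> x = copp y.
Proof. intro E. rewrite <- (caddr0 x), <- (caddrN y), caddA, E, cadd0. reflexivity. Qed.

Lemma cmul0r x : cmul c0 x = c0.
Proof. apply (caddIr (cmul c0 x)). rewrite <- cmulDl, !cadd0. reflexivity. Qed.

Lemma cmulr0 x : cmul x c0 = c0.
Proof. apply (caddIr (cmul x c0)). rewrite <- cmulDr, !cadd0. reflexivity. Qed.

Lemma cmulNr x y : cmul (copp x) y = copp (cmul x y).
Proof. apply caddr_eq0. rewrite <- cmulDl, caddN, cmul0r. reflexivity. Qed.

Lemma cmulrN x y : cmul x (copp y) = copp (cmul x y).
Proof. apply caddr_eq0. rewrite <- cmulDr, caddN, cmulr0. reflexivity. Qed.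

Lemma copprK x : copp (copp x) = x.
Proof. symmetry. apply caddr_eq0, caddrN. Qed.

Lemma coppr0 : copp (@c0 A) = c0.
Proof. symmetry. apply caddr_eq0, cadd0. Qed.

Lemma rscalr0 a : rscal A a c0 = c0.
Proof. apply (caddIr (rscal A a c0)). rewrite <- rscalDr, !cadd0. reflexivity. Qed.

Lemma eq_copp_eq0 x : x = copp x -> x = c0.
Proof.
  intro E. assert (Exx : cadd x x = c0) by (rewrite E at 1; apply caddN).
  rewrite <- (rscal1 A x). replace 1%R with (/2 * 2)%R by field.
  rewrite <- rscalA. replace 2%R with (1 + 1)%R by ring.
  rewrite rscalDl, rscal1, Exx, rscalr0. reflexivity.
Qed.

Lemma cstar0 : cstar (@c0 A) = c0.
Proof. apply (caddIr (cstar (@c0 A))). rewrite <- cstarD, !cadd0. reflexivity. Qed.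

Lemma cmul_cstar_eq0 x : cmul x (cstar x) = c0 -> x = c0.
Proof.
  intro E. pose proof (cnorm_cstar A (cstar x)) as Enorm.
  rewrite cstarK, E, (proj2 (cnorm_eq0 A c0) eq_refl) in Enorm.
  assert (Ex : cstar x = c0).
  { apply cnorm_eq0. destruct (Rmult_integral _ _ (eq_sym Enorm)); assumption. }
  rewrite <- (cstarK A x), Ex. apply cstar0.
Qed.

Lemma cmul_csum x n f : cmul x (csum n f) = csum n (fun k => cmul x (f k)).
Proof. induction n as [|n IH]; simpl; [apply cmulr0 | rewrite cmulDr, IH; reflexivity]. Qed.

Lemma csum_eq0 n (f : nat -> A) : (forall k, k < n -> f k = c0) -> csum n f = c0.
Proof.
  induction n as [|n IH]; simpl; intro Hf; [reflexivity |].
  rewrite IH, Hf, cadd0; auto with arith.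
Qed.

Definition csgn (s : bool) x : A := if s then copp x else x.

Lemma csgn_mull s x y : cmul (csgn s x) y = csgn s (cmul x y).
Proof. destruct s; [apply cmulNr | reflexivity]. Qed.

Lemma csgn_mulr s x y : cmul x (csgn s y) = csgn s (cmul x y).
Proof. destruct s; [apply cmulrN | reflexivity]. Qed.

Lemma csgnK s t x : csgn s (csgn t x) = csgn (xorb s t) x.
Proof. destruct s, t; simpl; rewrite ?copprK; reflexivity. Qed.

Lemma mul3_rev_csgn {x y z} {s t r : bool} :
  cmul y x = csgn s (cmul x y) -> cmul z x = csgn t (cmul x z) ->
  cmul z y = csgn r (cmul y z) ->
  cmul (cmul z y) x = csgn (xorb r (xorb t s)) (cmul (cmul x y) z).
Proof.
  intros Eyx Ezx Ezy.
  rewrite Ezy, csgn_mull, <- cmulA, Ezx, csgn_mulr, cmulA, Eyx, csgn_mull, !csgnK.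
  rewrite xorb_assoc_reverse. reflexivity.
Qed.

End Ring.

Ltac eqb_case :=
  repeat match goal with |- context [Nat.eqb ?a ?b] => destruct (Nat.eqb_spec a b) end;
  simpl; try reflexivity; try lia.

Definition same_line (i j k l : nat) : bool :=
  (negb (Nat.eqb i k && Nat.eqb j l) && (Nat.eqb i k || Nat.eqb j l))%bool.

Lemma same_line_sym i j k l : same_line k l i j = same_line i j k l.
Proof. unfold same_line. eqb_case. Qed.

Lemma same_line_transp i j k l : same_line j i l k = same_line i j k l.
Proof. unfold same_line. eqb_case. Qed.

Lemma same_line_row i j k : j <> k -> same_line i j i k = true.
Proof. intros. unfold same_line. eqb_case. Qed.

Lemma same_lineP i j k l :
  same_line i j k l = true -> (i = k /\ j <> l) \/ (j = l /\ i <> k).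
Proof. unfold same_line. eqb_case; intros; discriminate. Qed.

Lemma same_line_parity3 i j k m l : j <> k -> l <> j -> l <> k ->
  xorb (same_line m l i k) (xorb (same_line m l i j) (same_line i k i j)) = true.
Proof. intros. unfold same_line. eqb_case. Qed.

Lemma same_line_parity2 i1 j1 i2 j2 i3 j3 :
  i1 < 2 -> j1 < 2 -> i2 < 2 -> j2 < 2 -> i3 < 2 -> j3 < 2 ->
  xorb (same_line i3 j3 i2 j2) (xorb (same_line i3 j3 i1 j1) (same_line i2 j2 i1 j1)) = false.
Proof. intros. unfold same_line. eqb_case. Qed.

Lemma ndist3_eq3 x y z : ndist3 x y z = 3 <-> x <> y /\ y <> z /\ x <> z.
Proof. unfold ndist3. eqb_case; split; intros; (discriminate || lia). Qed.

Lemma ndist3_le2 x y z : ndist3 x y z <= 2 <-> x = y \/ y = z \/ x = z.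
Proof. unfold ndist3. eqb_case. Qed.

Lemma exists_other N j k : 3 <= N -> exists l, l < N /\ l <> j /\ l <> k.
Proof.
  intro HN.
  destruct (Nat.eq_dec j 0), (Nat.eq_dec k 0), (Nat.eq_dec j 1), (Nat.eq_dec k 1);
  solve [exists 0; lia | exists 1; lia | exists 2; lia].
Qed.

Definition transp {A : CStarAlgebra} (u : nat -> nat -> A) : nat -> nat -> A :=
  fun i j => u j i.

Definition row_disjoint N {A : CStarAlgebra} (u : nat -> nat -> A) : Prop :=
  forall i j k, i < N -> j < N -> k < N -> j <> k -> cmul (u i j) (u i k) = c0.

Definition row_flip N {A : CStarAlgebra} (u : nat -> nat -> A) : Prop :=
  forall i j k m l, i < N -> j < N -> k < N -> m < N -> l < N ->
    j <> k -> l <> j -> l <> k ->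
    cmul (cmul (u i j) (u i k)) (u m l) = copp (cmul (cmul (u m l) (u i k)) (u i j)).

Section Relations.
Variable A : CStarAlgebra.
Variable N : nat.
Implicit Types u : nat -> nat -> A.

Lemma rel_ObarE u : rel_Obar N u <->
  forall i j k l, i < N -> j < N -> k < N -> l < N ->
    cmul (u i j) (u k l) = csgn (same_line i j k l) (cmul (u k l) (u i j)).
Proof.
  unfold rel_Obar, csgn.
  split; intros H i j k l Hi Hj Hk Hl; specialize (H i j k l Hi Hj Hk Hl);
    [fold (same_line i j k l) in H | fold (same_line i j k l)];
    destruct (same_line i j k l); exact H.
Qed.

Lemma rel_HplusE u : rel_Hplus N u <-> row_disjoint N u /\ row_disjoint N (transp u).
Proof.
  split.
  - intro H. split; intros i j k Hi Hj Hk Hjk; apply (H i j k); assumption.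
  - intros [Hr Hc] i j k Hi Hj Hk Hjk. split; [apply Hr | apply (Hc i j k)]; assumption.
Qed.

Lemma orth_sa_transp u : orth_sa N u -> orth_sa N (transp u).
Proof.
  intros [Hsa [Hr Hc]]. split; [| split]; unfold transp.
  - intros i j Hi Hj. apply Hsa; assumption.
  - exact Hc.
  - exact Hr.
Qed.

Lemma rel_O_transp u : rel_O N u -> rel_O N (transp u).
Proof. intros H i j k l Hi Hj Hk Hl. apply H; assumption. Qed.

Lemma rel_Ostar_transp u : rel_Ostar N u -> rel_Ostar N (transp u).
Proof. intros H i1 j1 i2 j2 i3 j3 H1 H2 H3 H4 H5 H6. apply H; assumption. Qed.

Lemma rel_Obar_transp u : rel_Obar N u -> rel_Obar N (transp u).
Proof.
  rewrite !rel_ObarE. intros H i j k l Hi Hj Hk Hl. unfold transp.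
  rewrite <- same_line_transp. apply H; assumption.
Qed.

Lemma rel_Obarstar_transp u : rel_Obarstar N u -> rel_Obarstar N (transp u).
Proof.
  intros H i1 j1 i2 j2 i3 j3 H1 H2 H3 H4 H5 H6.
  destruct (H j1 i1 j2 i2 j3 i3 H2 H1 H4 H3 H6 H5) as [Hanti Hcomm].
  split; intro Hc; [apply Hanti | apply Hcomm]; tauto.
Qed.

Lemma rel_Ostar_of_O u : rel_O N u -> rel_Ostar N u.
Proof.
  intros H i1 j1 i2 j2 i3 j3 H1 H2 H3 H4 H5 H6.
  rewrite (H i1 j1 i2 j2), <- cmulA, (H i1 j1 i3 j3), cmulA, (H i2 j2 i3 j3) by assumption.
  reflexivity.
Qed.

Lemma row_disjoint_of_O_Obar u : rel_O N u -> rel_Obar N u -> row_disjoint N u.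
Proof.
  rewrite rel_ObarE. intros HO HB i j k Hi Hj Hk Hjk. apply eq_copp_eq0.
  rewrite (HB i j i k) at 1 by assumption.
  rewrite same_line_row, HO by assumption. reflexivity.
Qed.

Lemma rel_Hplus_of_O_Obar u : rel_O N u -> rel_Obar N u -> rel_Hplus N u.
Proof.
  intros HO HB. apply rel_HplusE. split; apply row_disjoint_of_O_Obar;
    auto using rel_O_transp, rel_Obar_transp.
Qed.

Lemma Hplus_same_line_mul0 u i j k l :
  rel_Hplus N u -> i < N -> j < N -> k < N -> l < N ->
  same_line i j k l = true -> cmul (u i j) (u k l) = c0.
Proof.
  intros HP Hi Hj Hk Hl E.
  destruct (same_lineP _ _ _ _ E) as [[<- Ejl] | [<- Eik]];
    [apply (HP i j l) | apply (HP j i k)]; assumption.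
Qed.

Lemma rel_Obar_of_O_Hplus u : rel_O N u -> rel_Hplus N u -> rel_Obar N u.
Proof.
  intros HO HP. apply rel_ObarE. intros i j k l Hi Hj Hk Hl.
  destruct (same_line i j k l) eqn:E; simpl; [| apply HO; assumption].
  assert (E' : same_line k l i j = true) by (rewrite same_line_sym; exact E).
  rewrite (Hplus_same_line_mul0 u i j k l), (Hplus_same_line_mul0 u k l i j), coppr0
    by assumption.
  reflexivity.
Qed.

Lemma rel_O_of_Obar_Hplus u : rel_Obar N u -> rel_Hplus N u -> rel_O N u.
Proof.
  rewrite rel_ObarE. intros HB HP i j k l Hi Hj Hk Hl. rewrite HB by assumption.
  destruct (same_line i j k l) eqn:E; simpl; [| reflexivity].
  assert (E' : same_line k l i j = true) by (rewrite same_line_sym; exact E).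
  rewrite (Hplus_same_line_mul0 u k l i j), coppr0 by assumption.
  reflexivity.
Qed.

Lemma eq0_of_mul_column u (p : A) l : orth_sa N u -> l < N ->
  (forall m, m < N -> cmul p (u m l) = c0) -> p = c0.
Proof.
  intros [_ [_ Hc]] Hl Hp. specialize (Hc l l Hl Hl). unfold kron in Hc.
  rewrite Nat.eqb_refl in Hc. rewrite <- (cmul1r A p), <- Hc, cmul_csum.
  apply csum_eq0. intros k Hk. rewrite cmulA, Hp, cmul0r by assumption. reflexivity.
Qed.

Lemma row_flip_Obar u : rel_Obar N u -> row_flip N u.
Proof.
  rewrite rel_ObarE. intros HB i j k m l Hi Hj Hk Hm Hl Hjk Hlj Hlk.
  rewrite (mul3_rev_csgn (HB i k i j Hi Hk Hi Hj) (HB m l i j Hm Hl Hi Hj)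
             (HB m l i k Hm Hl Hi Hk)), same_line_parity3 by assumption.
  simpl. rewrite copprK. reflexivity.
Qed.

Lemma row_flip_Obarstar u : rel_Obarstar N u -> row_flip N u.
Proof.
  intros HB i j k m l Hi Hj Hk Hm Hl Hjk Hlj Hlk.
  apply (HB i j i k m l); try assumption.
  left. split; [apply ndist3_le2 | apply ndist3_eq3]; auto.
Qed.

Lemma row_disjoint_of_flip u : 3 <= N -> orth_sa N u -> rel_Ostar N u ->
  row_flip N u -> row_disjoint N u.
Proof.
  intros HN Hu HS HF i j k Hi Hj Hk Hjk.
  destruct (exists_other N j k HN) as [l [Hl [Hlj Hlk]]].
  apply (eq0_of_mul_column u _ l Hu Hl). intros m Hm. apply eq_copp_eq0.
  rewrite HF at 1 by assumption. rewrite HS by assumption. reflexivity.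
Qed.

Lemma rel_Hplus_of_Ostar_Obar u : 3 <= N -> orth_sa N u -> rel_Ostar N u ->
  rel_Obar N u -> rel_Hplus N u.
Proof.
  intros HN Hu HS HB. apply rel_HplusE. split; apply row_disjoint_of_flip;
    auto using orth_sa_transp, rel_Ostar_transp, row_flip_Obar, rel_Obar_transp.
Qed.

Lemma rel_Hplus_of_Ostar_Obarstar u : 3 <= N -> orth_sa N u -> rel_Ostar N u ->
  rel_Obarstar N u -> rel_Hplus N u.
Proof.
  intros HN Hu HS HB. apply rel_HplusE. split; apply row_disjoint_of_flip;
    auto using orth_sa_transp, rel_Ostar_transp, row_flip_Obarstar, rel_Obarstar_transp.
Qed.

Lemma mul3_eq0_of_ends u i1 j1 i2 j2 i3 j3 : orth_sa N u -> rel_Ostar N u ->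
  i1 < N -> j1 < N -> i2 < N -> j2 < N -> i3 < N -> j3 < N ->
  cmul (u i1 j1) (u i3 j3) = c0 -> cmul (cmul (u i1 j1) (u i2 j2)) (u i3 j3) = c0.
Proof.
  intros [Hsa _] HS H1 H2 H3 H4 H5 H6 E. apply cmul_cstar_eq0.
  rewrite !cstarM, !Hsa by assumption.
  (* (xyz)(xyz)^* = x(yzz)(yx) and yzz = zzy, so the product contains xz. *)
  transitivity (cmul (cmul (u i1 j1) (cmul (cmul (u i2 j2) (u i3 j3)) (u i3 j3)))
                     (cmul (u i2 j2) (u i1 j1))).
  { rewrite !cmulA. reflexivity. }
  rewrite (HS i2 j2 i3 j3 i3 j3), !cmulA, E, !cmul0r by assumption. reflexivity.
Qed.

Lemma mul3_eq0_of_rows u i1 j1 i2 j2 i3 j3 : orth_sa N u -> rel_Ostar N u ->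
  row_disjoint N u ->
  i1 < N -> j1 < N -> i2 < N -> j2 < N -> i3 < N -> j3 < N ->
  ndist3 i1 i2 i3 <= 2 -> ndist3 j1 j2 j3 = 3 ->
  cmul (cmul (u i1 j1) (u i2 j2)) (u i3 j3) = c0.
Proof.
  intros Hu HS HR H1 H2 H3 H4 H5 H6 Hr Hs.
  apply ndist3_le2 in Hr. apply ndist3_eq3 in Hs. destruct Hs as [? [? ?]].
  destruct Hr as [<- | [<- | <-]].
  - rewrite HR, cmul0r by assumption. reflexivity.
  - rewrite <- cmulA, HR, cmulr0 by assumption. reflexivity.
  - apply mul3_eq0_of_ends; auto.
Qed.

Lemma rel_Obarstar_of_Ostar_Hplus u : orth_sa N u -> rel_Ostar N u -> rel_Hplus N u ->
  rel_Obarstar N u.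
Proof.
  intros Hu HS HP i1 j1 i2 j2 i3 j3 H1 H2 H3 H4 H5 H6. cbv zeta.
  rewrite (HS i1 j1 i2 j2 i3 j3) by assumption.
  split; [| reflexivity]. intro Hc.
  enough (E : cmul (cmul (u i1 j1) (u i2 j2)) (u i3 j3) = c0).
  { rewrite <- (HS i1 j1 i2 j2 i3 j3), E, coppr0 by assumption. reflexivity. }
  apply rel_HplusE in HP. destruct HP as [HR HC].
  destruct Hc as [[Hr Hs] | [Hr Hs]].
  - apply mul3_eq0_of_rows; assumption.
  - apply (mul3_eq0_of_rows (transp u));
      auto using orth_sa_transp, rel_Ostar_transp.
Qed.

End Relations.

Lemma rel_Ostar_of_Obar2 {A : CStarAlgebra} (u : nat -> nat -> A) :
  rel_Obar 2 u -> rel_Ostar 2 u.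
Proof.
  rewrite rel_ObarE. intros HB i1 j1 i2 j2 i3 j3 H1 H2 H3 H4 H5 H6. symmetry.
  rewrite (mul3_rev_csgn (HB i2 j2 i1 j1 H3 H4 H1 H2) (HB i3 j3 i1 j1 H5 H6 H1 H2)
             (HB i3 j3 i2 j2 H5 H6 H3 H4)), same_line_parity2 by assumption.
  reflexivity.
Qed.

Lemma rel_Obarstar_of_Ostar2 {A : CStarAlgebra} (u : nat -> nat -> A) :
  rel_Ostar 2 u -> rel_Obarstar 2 u.
Proof.
  intros HS i1 j1 i2 j2 i3 j3 H1 H2 H3 H4 H5 H6. cbv zeta.
  split; [intros [[_ Hs] | [Hr _]]; exfalso | intros _; apply HS; assumption].
  - apply ndist3_eq3 in Hs. lia.
  - apply ndist3_eq3 in Hr. lia.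
Qed.

Definition orth2 {A : CStarAlgebra} (a b c d : A) : Prop :=
  cadd (cmul a a) (cmul b b) = c1 /\ cadd (cmul c c) (cmul d d) = c1 /\
  cadd (cmul a a) (cmul c c) = c1 /\ cadd (cmul b b) (cmul d d) = c1 /\
  cadd (cmul a c) (cmul b d) = c0 /\ cadd (cmul c a) (cmul d b) = c0 /\
  cadd (cmul a b) (cmul c d) = c0 /\ cadd (cmul b a) (cmul d c) = c0.

Section Orth2.
Context {A : CStarAlgebra}.
Implicit Types a b c d x y z : A.

Lemma orth2_of_orth_sa (u : nat -> nat -> A) :
  orth_sa 2 u -> orth2 (u 0 0) (u 0 1) (u 1 0) (u 1 1).
Proof.
  intros [_ [Hr Hc]].
  assert (Er : forall i j, i < 2 -> j < 2 ->
            cadd (cmul (u i 0) (u j 0)) (cmul (u i 1) (u j 1)) = kron i j).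
  { intros i j Hi Hj. rewrite <- (Hr i j Hi Hj). simpl. rewrite cadd0. reflexivity. }
  assert (Ec : forall i j, i < 2 -> j < 2 ->
            cadd (cmul (u 0 i) (u 0 j)) (cmul (u 1 i) (u 1 j)) = kron i j).
  { intros i j Hi Hj. rewrite <- (Hc i j Hi Hj). simpl. rewrite cadd0. reflexivity. }
  repeat split;
    [ apply (Er 0 0) | apply (Er 1 1) | apply (Ec 0 0) | apply (Ec 1 1)
    | apply (Er 0 1) | apply (Er 1 0) | apply (Ec 0 1) | apply (Ec 1 0) ]; lia.
Qed.

Lemma orth2_swap_cols {a b c d} : orth2 a b c d -> orth2 b a d c.
Proof.
  intros (h1 & h2 & h3 & h4 & r1 & r2 & r3 & r4).
  repeat split; try assumption; rewrite caddC; assumption.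
Qed.

Lemma orth2_swap_rows {a b c d} : orth2 a b c d -> orth2 c d a b.
Proof.
  intros (h1 & h2 & h3 & h4 & r1 & r2 & r3 & r4).
  repeat split; try assumption; rewrite caddC; assumption.
Qed.

Lemma sq_commute x y : cadd (cmul x x) (cmul y y) = c1 -> cmul (cmul x x) y = cmul y (cmul x x).
Proof.
  intro H. apply (caddIr (cmul (cmul y y) y)). transitivity y.
  - rewrite <- cmulDl, H, cmul1l. reflexivity.
  - rewrite <- (cmulA A y y y), <- cmulDr, H, cmul1r. reflexivity.
Qed.

Lemma orth2_mid_commute {a b c d} x z : orth2 a b c d ->
  In x [a; b; c; d] -> In z [a; b; c; d] -> cmul (cmul x a) z = cmul (cmul z a) x.
Proof.
  intros (h1 & h2 & h3 & h4 & r1 & r2 & r3 & r4) Hx Hz.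
  assert (Eaa : cmul a a = cmul d d).
  { apply (caddIr (cmul b b)). rewrite h1, <- h4. apply caddC. }
  assert (Ha2 : forall y, In y [a; b; c; d] -> cmul (cmul a a) y = cmul y (cmul a a)).
  { intros y [<- | [<- | [<- | [<- | []]]]].
    - rewrite cmulA. reflexivity.
    - apply sq_commute, h1.
    - apply sq_commute, h3.
    - rewrite Eaa, cmulA. reflexivity. }
  assert (Hb2d : cmul (cmul b b) d = cmul d (cmul b b)) by (apply sq_commute, h4).
  apply caddr_eq0 in r1, r2, r3, r4.
  assert (Ebac : cmul (cmul b a) c = cmul (cmul c a) b).
  { rewrite <- cmulA, r1, r2, cmulrN, cmulNr, !cmulA, <- (cmulA _ d b b), Hb2d.
    reflexivity. }
  assert (Ebad : cmul (cmul b a) d = cmul (cmul d a) b).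
  { rewrite r4, <- cmulA, r3, cmulNr, cmulrN, cmulA. reflexivity. }
  assert (Ecad : cmul (cmul c a) d = cmul (cmul d a) c).
  { rewrite r2, <- cmulA, r1, cmulNr, cmulrN, cmulA. reflexivity. }
  destruct Hx as [<- | [<- | [<- | [<- | []]]]];
  destruct Hz as [<- | [<- | [<- | [<- | []]]]];
  first [ reflexivity | assumption | symmetry; assumption
        | rewrite <- (cmulA _ _ a a); apply Ha2; simpl; tauto
        | rewrite <- (cmulA _ _ a a); symmetry; apply Ha2; simpl; tauto ].
Qed.

End Orth2.

Lemma rel_Ostar_of_orth_sa2 {A : CStarAlgebra} (u : nat -> nat -> A) :
  orth_sa 2 u -> rel_Ostar 2 u.
Proof.
  intros Hu i1 j1 i2 j2 i3 j3 H1 H2 H3 H4 H5 H6.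
  pose proof (orth2_of_orth_sa u Hu) as Ho.
  assert (Hin : forall i j, i < 2 -> j < 2 -> In (u i j) [u 0 0; u 0 1; u 1 0; u 1 1]).
  { intros [|[|i]] [|[|j]] Hi Hj; simpl; tauto || lia. }
  pose proof (Hin _ _ H1 H2) as E1. pose proof (Hin _ _ H5 H6) as E3.
  (* Swapping rows and/or columns brings u i2 j2 to position (0, 0). *)
  destruct i2 as [|[|i2]]; destruct j2 as [|[|j2]]; try lia;
    [ apply (orth2_mid_commute _ _ Ho)
    | apply (orth2_mid_commute _ _ (orth2_swap_cols Ho))
    | apply (orth2_mid_commute _ _ (orth2_swap_rows Ho))
    | apply (orth2_mid_commute _ _ (orth2_swap_cols (orth2_swap_rows Ho))) ];
    simpl in *; tauto.
Qed.
Theorem proposition4p2 :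
  (forall (N : nat), (3 <= N)%nat ->
   forall (A : CStarAlgebra) (u : nat -> nat -> A), orth_sa N u ->
     ((rel_O N u /\ rel_Obar N u) <-> rel_H N u) /\
     ((rel_O N u /\ rel_Obarstar N u) <-> rel_H N u) /\
     ((rel_Ostar N u /\ rel_Obar N u) <-> rel_H N u) /\
     ((rel_Ostar N u /\ rel_Obarstar N u) <-> rel_Hstar N u)) /\
  (forall (A : CStarAlgebra) (u : nat -> nat -> A), orth_sa 2 u ->
     ((rel_O 2 u /\ rel_Obar 2 u) <-> rel_H 2 u) /\
     ((rel_O 2 u /\ rel_Obarstar 2 u) <-> rel_O 2 u) /\
     ((rel_Ostar 2 u /\ rel_Obar 2 u) <-> rel_Obar 2 u) /\
     ((rel_Ostar 2 u /\ rel_Obarstar 2 u) <-> True)).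
Proof.
  unfold rel_H, rel_Hstar. split.
  - intros N HN A u Hu. split; [| split; [| split]]; split.
    + intros [HO HB]. split; [exact HO | apply rel_Hplus_of_O_Obar; assumption].
    + intros [HO HP]. split; [exact HO | apply rel_Obar_of_O_Hplus; assumption].
    + intros [HO HB]. split; [exact HO |].
      apply rel_Hplus_of_Ostar_Obarstar; auto using rel_Ostar_of_O.
    + intros [HO HP]. split; [exact HO |].
      apply rel_Obarstar_of_Ostar_Hplus; auto using rel_Ostar_of_O.
    + intros [HS HB]. split; [apply rel_O_of_Obar_Hplus |]; auto using rel_Hplus_of_Ostar_Obar.
    + intros [HO HP]. split; [apply rel_Ostar_of_O | apply rel_Obar_of_O_Hplus]; assumption.
    + intros [HS HB]. split; [exact HS | apply rel_Hplus_of_Ostar_Obarstar; assumption].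
    + intros [HS HP]. split; [exact HS | apply rel_Obarstar_of_Ostar_Hplus; assumption].
  - intros A u Hu. split; [| split; [| split]]; split; try tauto.
    + intros [HO HB]. split; [exact HO | apply rel_Hplus_of_O_Obar; assumption].
    + intros [HO HP]. split; [exact HO | apply rel_Obar_of_O_Hplus; assumption].
    + intro HO. split; [exact HO | apply rel_Obarstar_of_Ostar2, rel_Ostar_of_O, HO].
    + intro HB. split; [apply rel_Ostar_of_Obar2, HB | exact HB].
    + intros _. split; [| apply rel_Obarstar_of_Ostar2]; apply rel_Ostar_of_orth_sa2, Hu.
Qed.
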